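(* A fuzzy subset $\mu$ of a fuzzy $\Gamma$-hypersemigroup $(M,\circ)$ is a fuzzy $\Gamma$-hyper interior ideal of $(M,\circ)$ if and only if $(\chi_M\circ\alpha\circ\mu)\circ\beta\circ\chi_M\subseteq\mu$ for all $\alpha,\beta\in\Gamma$.
   Context: $M,\Gamma$ are nonempty sets; a fuzzy subset of $M$ is a map $M\to[0,1]$. A fuzzy $\Gamma$-hyperoperation assigns to each $(a,\gamma,b)\in M\times\Gamma\times M$ a fuzzy subset $a\circ\gamma\circ b$. For $a\in M$ and fuzzy $\mu$: $(a\circ\gamma\circ\mu)(r)=\bigvee_{t\in M}((a\circ\gamma\circ t)(r)\wedge\mu(t))$ if $\mu\ne0$, else $0$; $(\mu\circ\gamma\circ a)(r)=\bigvee_{t\in M}(\mu(t)\wedge(t\circ\gamma\circ a)(r))$ if $\mu\ne0$, else $0$. For fuzzy $\mu,\nu$: $(\mu\circ\gamma\circ\nu)(t)=\bigvee_{p,q\in M}(\mu(p)\wedge(p\circ\gamma\circ q)(t)\wedge\nu(q))$. $(M,\circ)$ is a fuzzy $\Gamma$-hypersemigroup if $(a\circ\alpha\circ b)\circ\beta\circ c=a\circ\alpha\circ(b\circ\beta\circ c)$ for all $a,b,c\in M$, $\alpha,\beta\in\Gamma$. $\chi_M$ is the constant function $1$. For fuzzy sets, $\mu\subseteq\nu$ means $\mu(x)\le\nu(x)$ for all $x$. A fuzzy subset $\mu$ is a fuzzy $\Gamma$-hyper interior ideal if $(x\circ\alpha\circ\mu)\circ\beta\circ y\subseteq\mu$ for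 all $x,y\in M$, $\alpha,\beta\in\Gamma$. *)

From HB Require Import structures.
From mathcomp Require Import all_boot all_order all_algebra.
From mathcomp Require Import boolp classical_sets reals.
Set Implicit Arguments. Unset Strict Implicit. Unset Printing Implicit Defensive.
Import Order.TTheory GRing.Theory Num.Theory.
Local Open Scope ring_scope.
Local Open Scope classical_set_scope.

Section FuzzyGamma.
Variables (R : realType) (M G : Type).

Definition is_fuzzy (mu : M -> R) : Prop := forall x, 0 <= mu x <= 1.

Definition is_fuzzy_hyperop (o : M -> G -> M -> M -> R) : Prop :=
  forall a g b, is_fuzzy (o a g b).

Definition fzero : M -> R := fun _ => 0.

Definition chiM : M -> R := fun _ => 1.

Definition elt_fz (o : M -> G -> M -> M -> R) (a : M) (g : G) (mu : M -> R)
  : M -> R :=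
  fun r => if `[< mu = fzero >] then 0
           else sup [set Num.min (o a g t r) (mu t) | t in [set: M]].

Definition fz_elt (o : M -> G -> M -> M -> R) (mu : M -> R) (g : G) (a : M)
  : M -> R :=
  fun r => if `[< mu = fzero >] then 0
           else sup [set Num.min (mu t) (o t g a r) | t in [set: M]].

Definition fz_fz (o : M -> G -> M -> M -> R) (mu : M -> R) (g : G) (nu : M -> R)
  : M -> R :=
  fun t => sup [set x | exists p q,
                  x = Num.min (mu p) (Num.min (o p g q t) (nu q))].

Definition is_fuzzy_hypersemigroup (o : M -> G -> M -> M -> R) : Prop :=
  forall a b c al be, fz_elt o (o a al b) be c = elt_fz o a al (o b be c).

Definition fsubset (mu nu : M -> R) : Prop := forall x, mu x <= nu x.

Definition is_fuzzy_hyper_interior_ideal (o : M -> G -> M -> M -> R)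
  (mu : M -> R) : Prop :=
  forall x y al be, fsubset (fz_elt o (elt_fz o x al mu) be y) mu.

End FuzzyGamma.

From mathcomp Require Import all_boot all_order all_algebra.
From mathcomp Require Import boolp classical_sets reals.
Set Implicit Arguments. Unset Strict Implicit.
Import Order.TTheory GRing.Theory Num.Theory.
Local Open Scope ring_scope.
Local Open Scope classical_set_scope.

(* Every fuzzy product is a supremum of minima, and a supremum of a bounded
   nonempty set lies below m exactly when each of its elements does.  Hence
   both the interior-ideal condition and the inclusion
   (chi_M o al o mu) o be o chi_M <= mu unfold to the same pointwise bound
   min (min ((x o al o t) r) (mu t)) ((r o be o y) s) <= mu s over all
   x, t, r, y, s; the chi_M factors disappear because they are the constant 1
   and every hyperproduct is bounded by 1. *)

Section SupMin.
Variable R : realType.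

Lemma sup_le_ubound (S : set R) m :
  S !=set0 -> has_ubound S -> (sup S <= m <-> ubound S m).
Proof.
move=> S0 Sub; split=> [supS_le e Se|]; last exact: ge_sup.
exact: le_trans (ub_le_sup Sub Se) supS_le.
Qed.

Lemma min_sup_le (S : set R) c m :
  S !=set0 -> has_ubound S ->
  (Num.min (sup S) c <= m <-> forall e, S e -> Num.min e c <= m).
Proof.
move=> S0 Sub; rewrite ge_min; split.
- case/orP=> [supS_le|c_le] e Se; rewrite ge_min; last by rewrite c_le orbT.
  by rewrite ((sup_le_ubound m S0 Sub).1 supS_le e Se).
- move=> minS_le; have [|m_lt_c] := leP c m; first by rewrite orbT.
  apply/orP; left; apply/(sup_le_ubound m S0 Sub) => e Se.
  by move: (minS_le e Se); rewrite ge_min (lt_geF m_lt_c) orbF.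
Qed.

End SupMin.

Section FuzzyProducts.
Variables (R : realType) (M G : Type) (HM : inhabited M).
Variable o : M -> G -> M -> M -> R.
Hypothesis o_le1 : forall a g b r, o a g b r <= 1.

Lemma elt_fz_min_le {m} (m_ge0 : 0 <= m) x g (nu : M -> R) r c :
  (Num.min (elt_fz o x g nu r) c <= m <->
   forall t, Num.min (Num.min (o x g t r) (nu t)) c <= m).
Proof.
rewrite /elt_fz; case: asboolP => [->|_].
  by split=> _ => [t|]; rewrite /fzero !ge_min m_ge0 ?orbT.
have [t0] := HM.
rewrite min_sup_le; last 2 first.
- by exists (Num.min (o x g t0 r) (nu t0)), t0.
- by exists 1 => _ [t _ <-]; rewrite ge_min o_le1.
by split=> [le_m t|le_m _ [t _ <-]]; apply: le_m; exists t.
Qed.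

Lemma fz_elt_le {m} (m_ge0 : 0 <= m) (nu : M -> R) g y s :
  (fz_elt o nu g y s <= m <-> forall r, Num.min (nu r) (o r g y s) <= m).
Proof.
rewrite /fz_elt; case: asboolP => [->|_].
  by split=> // _ r; rewrite /fzero ge_min m_ge0.
have [t0] := HM.
rewrite sup_le_ubound; last 2 first.
- by exists (Num.min (nu t0) (o t0 g y s)), t0.
- by exists 1 => _ [t _ <-]; rewrite ge_min o_le1 orbT.
by split=> [le_m r|le_m _ [r _ <-]]; apply: le_m; exists r.
Qed.

Let fz_fz_nonempty (nu la : M -> R) g s :
  [set e | exists p q, e = Num.min (nu p) (Num.min (o p g q s) (la q))]
    !=set0.
Proof. by have [t0] := HM; eexists; exists t0, t0. Qed.

Let fz_fz_ubound (nu la : M -> R) g s :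
  has_ubound
    [set e | exists p q, e = Num.min (nu p) (Num.min (o p g q s) (la q))].
Proof. by exists 1 => _ [p [q ->]]; rewrite !ge_min o_le1 orbT. Qed.

Lemma fz_fz_le (nu la : M -> R) g s m :
  fz_fz o nu g la s <= m <->
  forall p q, Num.min (nu p) (Num.min (o p g q s) (la q)) <= m.
Proof.
rewrite /fz_fz sup_le_ubound //.
by split=> [le_m p q|le_m _ [p [q ->]]]; apply: le_m; exists p, q.
Qed.

Lemma min_fz_fz_le (nu la : M -> R) g s c m :
  Num.min (fz_fz o nu g la s) c <= m <->
  forall p q, Num.min (Num.min (nu p) (Num.min (o p g q s) (la q))) c <= m.
Proof.
rewrite /fz_fz min_sup_le //.
by split=> [le_m p q|le_m _ [p [q ->]]]; apply: le_m; exists p, q.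
Qed.

Definition chain_bounded (mu : M -> R) : Prop :=
  forall al be x t r y s,
    Num.min (Num.min (o x al t r) (mu t)) (o r be y s) <= mu s.

Variables (mu : M -> R) (mu_ge0 : forall t, 0 <= mu t).

Lemma interior_idealE :
  is_fuzzy_hyper_interior_ideal o mu <-> chain_bounded mu.
Proof.
split=> [ideal al be x t r y s | bounded x y al be s].
- by have /(fz_elt_le (mu_ge0 s)) /(_ r) /(elt_fz_min_le (mu_ge0 s)) :=
    ideal x y al be s.
- apply/(fz_elt_le (mu_ge0 s)) => r.
  by apply/(elt_fz_min_le (mu_ge0 s)) => t; apply: bounded.
Qed.

Lemma chiM_interior_subsetE :
  (forall al be : G,
     fsubset (fz_fz o (fz_fz o (@chiM R M) al mu) be (@chiM R M)) mu) <->
  chain_bounded mu.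
Proof.
have drop_chiM x al t r be y s :
  Num.min (Num.min (chiM R x) (Num.min (o x al t r) (mu t)))
          (Num.min (o r be y s) (chiM R y))
  = Num.min (Num.min (o x al t r) (mu t)) (o r be y s).
  have min_le1 : Num.min (o x al t r) (mu t) <= 1 by rewrite ge_min o_le1.
  by rewrite /chiM (min_idPl (o_le1 r be y s)) (min_idPr min_le1).
split=> [incl al be x t r y s | bounded al be s].
- have /fz_fz_le /(_ r y) /min_fz_fz_le /(_ x t) := incl al be s.
  by rewrite drop_chiM.
- apply/fz_fz_le => r y; apply/min_fz_fz_le => x t.
  by rewrite drop_chiM; apply: bounded.
Qed.

End FuzzyProducts.

Theorem theorem4p16 (R : realType) (M G : Type)
  (HM : inhabited M) (HG : inhabited G)
  (o : M -> G -> M -> M -> R)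
  (Ho : is_fuzzy_hyperop o)
  (Hsg : is_fuzzy_hypersemigroup o)
  (mu : M -> R) (Hmu : is_fuzzy mu) :
  is_fuzzy_hyper_interior_ideal o mu <->
  (forall al be : G,
     fsubset (fz_fz o (fz_fz o (@chiM R M) al mu) be (@chiM R M)) mu).
Proof.
have o_le1 a g b r : o a g b r <= 1 by case/andP: (Ho a g b r).
have mu_ge0 t : 0 <= mu t by case/andP: (Hmu t).
by rewrite (interior_idealE HM o_le1 mu_ge0) (chiM_interior_subsetE HM o_le1).
Qed.
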